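(* Let $\mathbb F_q$ be a finite field with $q>2$ elements, $\mathbb F_q^*=\mathbb F_q\setminus\{0\}$, and let $\mathcal{SC}\subset\mathbb Z[\mathrm{SL}_2(\mathbb F_q)]$ be the $\mathbb Z$-span of the seven elements $$A=\left(\begin{array}{cc}\mathbb F_q^*&0\\0&\mathbb F_q^*\end{array}\right),\ B=\left(\begin{array}{cc}0&\mathbb F_q^*\\\mathbb F_q^*&0\end{array}\right),\ C=\left(\begin{array}{cc}\mathbb F_q^*&\mathbb F_q^*\\\mathbb F_q^*&\mathbb F_q^*\end{array}\right),$$ $$D_+=\left(\begin{array}{cc}\mathbb F_q^*&\mathbb F_q^*\\0&\mathbb F_q^*\end{array}\right),\ D_-=\left(\begin{array}{cc}\mathbb F_q^*&0\\\mathbb F_q^*&\mathbb F_q^*\end{array}\right),\ E_+=\left(\begin{array}{cc}\mathbb F_q^*&\mathbb F_q^*\\\mathbb F_q^*&0\end{array}\right),\ E_-=\left(\begin{array}{cc}0&\mathbb F_q^*\\\mathbb F_q^*&\mathbb F_q^*\end{array}\right),$$ which is a subring of $\mathbb Z[\mathrm{SL}_2(\mathbb F_q)]$. Then the $\mathbb Q$-algebra $\mathcal{SC}_{\mathbb Q}=\mathcal{SC}\otimes_{\mathbb Z}\mathbb Q$ is semi-simple and isomorphic to $\mathbb Q\oplus\mathbb Q\oplus\mathbb Q\oplus M_2(\mathbb Q)$, where $M_2(\mathbb Q)$ denotes the algebra of $2\times 2$ rational matrices.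
   Context: For subsets $\mathcal A,\mathcal B,\mathcal C,\mathcal D$ of $\mathbb F_q$, the symbol $\left(\begin{array}{cc}\mathcal A&\mathcal B\\\mathcal C&\mathcal D\end{array}\right)$ denotes the element $\sum \left(\begin{array}{cc}a&b\\c&d\end{array}\right)$ of $\mathbb Z[\mathrm{SL}_2(\mathbb F_q)]$, where the sum runs over all $(a,b,c,d)\in\mathcal A\times\mathcal B\times\mathcal C\times\mathcal D$ with $ad-bc=1$; an entry $0$ stands for the singleton $\{0\}$. So these are the sums of all matrices in $\mathrm{SL}_2(\mathbb F_q)$ with a given support. $\mathcal{SC}_{\mathbb Q}$ is a 7-dimensional $\mathbb Q$-algebra (with identity $\frac{1}{q-1}A$). *)

From HB Require Import structures.
From mathcomp Require Import all_boot all_order all_algebra.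
Set Implicit Arguments. Unset Strict Implicit. Unset Printing Implicit Defensive.
Import GRing.Theory.
Local Open Scope ring_scope.

(* Elements of Q[SL_2(F)] are represented as rational-valued functions on
   2x2 matrices over F supported on SL_2(F) (matrices with ad - bc = 1). *)
Definition grp_alg (F : finFieldType) := {ffun 'M[F]_2 -> rat}.

Definition gmul (F : finFieldType) (f g : grp_alg F) : grp_alg F :=
  [ffun x => \sum_(y : 'M[F]_2) \sum_(z : 'M[F]_2 | y *m z == x) f y * g z].

Definition in_SL2 (F : finFieldType) (M : 'M[F]_2) : bool :=
  M 0 0 * M 1 1 - M 0 1 * M 1 0 == 1.

Definition supp_sum (F : finFieldType) (pa pb pc pd : pred F) : grp_alg F :=
  [ffun M => if [&& in_SL2 M, pa (M 0 0), pb (M 0 1), pc (M 1 0) & pd (M 1 1)]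
             then 1 else 0].

Definition nz (F : finFieldType) : pred F := fun x => x != 0.
Definition zr (F : finFieldType) : pred F := fun x => x == 0.

Definition SC_A  (F : finFieldType) := supp_sum (@nz F) (@zr F) (@zr F) (@nz F).
Definition SC_B  (F : finFieldType) := supp_sum (@zr F) (@nz F) (@nz F) (@zr F).
Definition SC_C  (F : finFieldType) := supp_sum (@nz F) (@nz F) (@nz F) (@nz F).
Definition SC_Dp (F : finFieldType) := supp_sum (@nz F) (@nz F) (@zr F) (@nz F).
Definition SC_Dm (F : finFieldType) := supp_sum (@nz F) (@zr F) (@nz F) (@nz F).
Definition SC_Ep (F : finFieldType) := supp_sum (@nz F) (@nz F) (@nz F) (@zr F).
Definition SC_Em (F : finFieldType) := supp_sum (@zr F) (@nz F) (@nz F) (@nz F).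

Definition SC_gens (F : finFieldType) : seq (grp_alg F) :=
  [:: SC_A F; SC_B F; SC_C F; SC_Dp F; SC_Dm F; SC_Ep F; SC_Em F].

Definition in_SCQ (F : finFieldType) (x : grp_alg F) : Prop :=
  exists c : 'I_7 -> rat,
    x = [ffun M => \sum_(i < 7) c i * nth 0 (SC_gens F) i M].

Definition gscale (F : finFieldType) (a : rat) (x : grp_alg F) : grp_alg F :=
  [ffun M => a * x M].

Definition target := (rat * rat * rat * 'M[rat]_2)%type.

Definition tscale (a : rat) (t : target) : target :=
  (a * t.1.1.1, a * t.1.1.2, a * t.1.2, a *: t.2).

From HB Require Import structures.
From mathcomp Require Import all_boot all_order all_algebra.
From mathcomp Require Import ring lra.
Set Implicit Arguments. Unset Strict Implicit. Unset Printing Implicit Defensive.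
Import GRing.Theory Num.Theory.
Local Open Scope ring_scope.

(* Every element of SC_Q is a function on SL_2(F) that only depends on the zero
   pattern of its argument, and exactly seven patterns occur in SL_2(F); so SC_Q
   is the 7-dimensional space of pattern functions.  Left multiplication by the
   diagonal sum A, the antidiagonal sum B and the Borel sum P = A + D_+ acts on
   pattern functions by explicit formulas, obtained by counting the solutions
   of y * z = x (for P this is a sum over the unipotent radical).  The other
   generators are rational combinations of A, B and products of A, B, P (for
   instance D_+ = P - A and E_- = BP/(q-1) - B), so A, B, P generate SC_Q.
   Recording the values of a pattern function at one matrix of each pattern,
   followed by an invertible linear change of coordinates into
   Q + Q + Q + M_2(Q), turns left multiplication by A, B and P into
   multiplication by their images; hence this map is multiplicative on all of
   SC_Q.  The hypothesis q > 2 is used only to find a matrix of SL_2(F) with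
   four nonzero entries. *)

Definition mx22 (R : Type) (a b c d : R) : 'M[R]_2 :=
  \matrix_(i < 2, j < 2) if val i == 0%N then (if val j == 0%N then a else b)
                         else (if val j == 0%N then c else d).

Section Mx22.
Variable R : Type.
Implicit Types a b c d : R.

Lemma mx22_00 a b c d : mx22 a b c d 0 0 = a. Proof. by rewrite mxE. Qed.
Lemma mx22_01 a b c d : mx22 a b c d 0 1 = b. Proof. by rewrite mxE. Qed.
Lemma mx22_10 a b c d : mx22 a b c d 1 0 = c. Proof. by rewrite mxE. Qed.
Lemma mx22_11 a b c d : mx22 a b c d 1 1 = d. Proof. by rewrite mxE. Qed.

Definition mx22E := (mx22_00, mx22_01, mx22_10, mx22_11).

Lemma mx22_eta (M : 'M[R]_2) : M = mx22 (M 0 0) (M 0 1) (M 1 0) (M 1 1).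
Proof.
apply/matrixP => i j; rewrite mxE.
by case: i => [[|[|i]] Hi] //; case: j => [[|[|j]] Hj] //=; congr (M _ _); apply: val_inj.
Qed.

End Mx22.

Lemma mul_mx22 (R : pzRingType) (a b c d e f g h : R) :
  mx22 a b c d *m mx22 e f g h = mx22 (a*e+b*g) (a*f+b*h) (c*e+d*g) (c*f+d*h).
Proof.
apply/matrixP => i j; rewrite !mxE !big_ord_recr big_ord0 /= add0r !mxE.
by case: i => [[|[|i]] Hi] //; case: j => [[|[|j]] Hj].
Qed.

Lemma add_mx22 (R : zmodType) (a b c d a' b' c' d' : R) :
  mx22 a b c d + mx22 a' b' c' d' = mx22 (a+a') (b+b') (c+c') (d+d').
Proof.
apply/matrixP => i j; rewrite !mxE.
by case: i => [[|[|i]] Hi] //; case: j => [[|[|j]] Hj].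
Qed.

Lemma scale_mx22 (R : pzRingType) (k a b c d : R) :
  k *: mx22 a b c d = mx22 (k*a) (k*b) (k*c) (k*d).
Proof.
apply/matrixP => i j; rewrite !mxE.
by case: i => [[|[|i]] Hi] //; case: j => [[|[|j]] Hj].
Qed.

Lemma mx22_1 (R : pzRingType) : (1%:M : 'M[R]_2) = mx22 1 0 0 1.
Proof.
apply/matrixP => i j; rewrite !mxE.
by case: i => [[|[|i]] Hi] //; case: j => [[|[|j]] Hj].
Qed.

Lemma mx22_0 (R : zmodType) : mx22 0 0 0 0 = 0 :> 'M[R]_2.
Proof.
apply/matrixP => i j; rewrite !mxE.
by case: i => [[|[|i]] Hi] //; case: j => [[|[|j]] Hj].
Qed.

(* [true] marks a nonzero entry; the components are ordered a, b, c, d. *)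
Definition pattern := (bool * bool * bool * bool)%type.

Definition gen_pattern (k : nat) : pattern :=
  match k with
  | 0 => (true, false, false, true) | 1 => (false, true, true, false)
  | 2 => (true, true, true, true)   | 3 => (true, true, false, true)
  | 4 => (true, false, true, true)  | 5 => (true, true, true, false)
  | _ => (false, true, true, true)
  end.

Definition pattern_index (p : pattern) : nat :=
  match p with
  | (true, false, false, true) => 0 | (false, true, true, false) => 1
  | (true, true, true, true) => 2   | (true, true, false, true) => 3
  | (true, false, true, true) => 4  | (true, true, true, false) => 5
  | _ => 6
  end.

Definition sl2_pattern (p : pattern) : bool :=
  let: (a, b, c, d) := p in (a && d) || (b && c).

Lemma sl2_patternP p : sl2_pattern p -> exists2 k, (k < 7)%N & p = gen_pattern k.
Proof.
case: p => [[[[] []] []] []] //= _;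
  by [exists 0%N | exists 1%N | exists 2%N | exists 3%N | exists 4%N | exists 5%N | exists 6%N].
Qed.

Lemma sum_gen_pattern (f : pattern -> rat) p : sl2_pattern p ->
  \sum_(k < 7) f (gen_pattern k) * (p == gen_pattern k)%:R = f p.
Proof.
rewrite !big_ord_recr big_ord0 /=.
by case: p => [[[[] []] []] []] //= _; rewrite ?mulr0 ?mulr1 ?add0r ?addr0.
Qed.

Section PatternFunctions.
Variable F : finFieldType.
Implicit Types (M : 'M[F]_2) (f g : pattern -> rat).

Definition zpat M : pattern := (M 0 0 != 0, M 0 1 != 0, M 1 0 != 0, M 1 1 != 0).

Definition pfun f : grp_alg F := [ffun M => if in_SL2 M then f (zpat M) else 0].

Lemma sl2_zpat M : in_SL2 M -> sl2_pattern (zpat M).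
Proof.
rewrite /in_SL2 /zpat /= => /eqP det1.
have bc_neq0 : M 0 0 * M 1 1 = 0 -> M 0 1 * M 1 0 != 0.
  move=> ad0; apply/eqP => bc0.
  by move: det1; rewrite ad0 bc0 subrr => /eqP; rewrite eq_sym oner_eq0.
have [a0 | a0] /= := eqVneq (M 0 0) 0.
  have ad0 : M 0 0 * M 1 1 = 0 by rewrite a0 mul0r.
  by move: (bc_neq0 ad0); rewrite mulf_eq0 negb_or.
have [d0 | d0] //= := eqVneq (M 1 1) 0.
have ad0 : M 0 0 * M 1 1 = 0 by rewrite d0 mulr0.
by move: (bc_neq0 ad0); rewrite mulf_eq0 negb_or.
Qed.

Lemma pfun_supp f M : pfun f M != 0 -> in_SL2 M.
Proof. by rewrite ffunE; case: (in_SL2 M); rewrite ?eqxx. Qed.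

Lemma eq_pfun f g :
  (forall k, (k < 7)%N -> f (gen_pattern k) = g (gen_pattern k)) -> pfun f = pfun g.
Proof.
move=> fg; apply/ffunP => M; rewrite !ffunE.
case sl2M: (in_SL2 M) => //.
by have [k lt_k7 ->] := sl2_patternP (sl2_zpat sl2M); apply: fg.
Qed.

Lemma pfunZ a f : gscale a (pfun f) = pfun (fun p => a * f p).
Proof. by apply/ffunP => M; rewrite !ffunE; case: (in_SL2 M); rewrite ?mulr0. Qed.

Lemma pfunD f g : pfun f + pfun g = pfun (fun p => f p + g p).
Proof. by apply/ffunP => M; rewrite !ffunE; case: (in_SL2 M); rewrite ?addr0. Qed.

Lemma pfun0 : pfun (fun _ => 0) = 0.
Proof. by apply/ffunP => M; rewrite !ffunE; case: (in_SL2 M). Qed.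

Lemma SC_gen_pfun (k : 'I_7) :
  nth 0 (SC_gens F) k = pfun (fun p => (p == gen_pattern k)%:R).
Proof.
apply/ffunP => M; case: k => [[|[|[|[|[|[|[|k]]]]]]] lt_k7] //=;
 rewrite /SC_A /SC_B /SC_C /SC_Dp /SC_Dm /SC_Ep /SC_Em /supp_sum !ffunE /zpat /nz /zr /=;
 case: (in_SL2 M) => //=;
 by case: (M 0 0 == 0); case: (M 0 1 == 0); case: (M 1 0 == 0); case: (M 1 1 == 0).
Qed.

Lemma pfun_SCQ f : in_SCQ (pfun f).
Proof.
exists (fun k => f (gen_pattern k)); apply/ffunP => M; rewrite !ffunE.
under eq_bigr => k _ do rewrite SC_gen_pfun ffunE.
case sl2M: (in_SL2 M); last by rewrite big1 // => k _; rewrite mulr0.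
by rewrite sum_gen_pattern // sl2_zpat.
Qed.

Lemma SCQ_pfun x : in_SCQ x -> exists f, x = pfun f.
Proof.
case=> c ->; exists (fun p => \sum_(k < 7) c k * (p == gen_pattern k)%:R).
apply/ffunP => M; rewrite !ffunE.
under eq_bigr => k _ do rewrite SC_gen_pfun ffunE.
by case: (in_SL2 M) => //; rewrite big1 // => k _; rewrite mulr0.
Qed.

End PatternFunctions.
Arguments pfun {F} f.

Lemma sum_delta (T : finType) (R : pzSemiRingType) (a : T) (X : T -> R) :
  \sum_w (a == w)%:R * X w = X a.
Proof.
rewrite (bigD1 a) //= eqxx mul1r big1 ?addr0 // => w.
by rewrite eq_sym => /negbTE ->; rewrite mul0r.
Qed.

Section GroupAlgebra.
Variable F : finFieldType.
Implicit Types f g h : grp_alg F.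

Lemma gmulE f g x : gmul f g x = \sum_y \sum_z (y *m z == x)%:R * (f y * g z).
Proof.
rewrite ffunE; apply: eq_bigr => y _; rewrite big_mkcond; apply: eq_bigr => z _.
by case: eqP; rewrite ?mul1r ?mul0r.
Qed.

Lemma gmul_gmull f g h x :
  gmul (gmul f g) h x = \sum_y \sum_z \sum_v (y *m z *m v == x)%:R * (f y * g z * h v).
Proof.
transitivity (\sum_w \sum_v \sum_y \sum_z
    (y *m z == w)%:R * ((w *m v == x)%:R * (f y * g z * h v))).
  rewrite gmulE; apply: eq_bigr => w _; apply: eq_bigr => v _.
  rewrite gmulE mulr_suml mulr_sumr; apply: eq_bigr => y _.
  by rewrite mulr_suml mulr_sumr; apply: eq_bigr => z _; ring.
under eq_bigr => w _.
  rewrite exchange_big; under eq_bigr do rewrite exchange_big.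
  over.
rewrite exchange_big; apply: eq_bigr => y _; rewrite exchange_big.
apply: eq_bigr => z _; rewrite exchange_big; apply: eq_bigr => v _.
exact: sum_delta.
Qed.

Lemma gmul_gmulr f g h x :
  gmul f (gmul g h) x = \sum_y \sum_z \sum_v (y *m (z *m v) == x)%:R * (f y * g z * h v).
Proof.
rewrite gmulE; apply: eq_bigr => y _.
transitivity (\sum_u \sum_z \sum_v
    (z *m v == u)%:R * ((y *m u == x)%:R * (f y * g z * h v))).
  apply: eq_bigr => u _; rewrite gmulE mulr_sumr mulr_sumr; apply: eq_bigr => z _.
  by rewrite mulr_sumr mulr_sumr; apply: eq_bigr => v _; ring.
rewrite exchange_big; apply: eq_bigr => z _; rewrite exchange_big.
apply: eq_bigr => v _; exact: sum_delta.
Qed.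

Lemma gmulA f g h : gmul (gmul f g) h = gmul f (gmul g h).
Proof.
apply/ffunP => x; rewrite gmul_gmull gmul_gmulr.
do 3!apply: eq_bigr => ? _; by rewrite mulmxA.
Qed.

Lemma gscale1 f : gscale 1 f = f.
Proof. by apply/ffunP => M; rewrite ffunE mul1r. Qed.

Lemma gmul_scaleDl a f g h : gmul (gscale a f + g) h = gscale a (gmul f h) + gmul g h.
Proof.
apply/ffunP => M; rewrite !ffunE mulr_sumr -big_split; apply: eq_bigr => y _.
rewrite mulr_sumr -big_split; apply: eq_bigr => z _.
by rewrite !ffunE /=; ring.
Qed.

Lemma gmul0l h : gmul 0 h = 0.
Proof.
apply/ffunP => M; rewrite !ffunE big1 // => y _.
by rewrite big1 // => z _; rewrite ffunE mul0r.
Qed.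

End GroupAlgebra.

Definition swap_rows (p : pattern) : pattern :=
  let: (a, b, c, d) := p in (c, d, a, b).

Section LeftMultiplication.
Variable F : finFieldType.
Local Notation q := (#|F|%:R : rat).
Implicit Types (M y : 'M[F]_2) (f : pattern -> rat).

Definition sl2_inv y : 'M[F]_2 := mx22 (y 1 1) (- y 0 1) (- y 1 0) (y 0 0).

Lemma mul_sl2_inv y : in_SL2 y -> y *m sl2_inv y = 1%:M /\ sl2_inv y *m y = 1%:M.
Proof.
rewrite /in_SL2 /sl2_inv (mx22_eta y) !mx22E !mul_mx22 mx22_1 => /eqP det1.
by split; congr mx22; rewrite -?det1; ring.
Qed.

Lemma gmul_sl2l (e g : grp_alg F) M : (forall y, e y != 0 -> in_SL2 y) ->
  gmul e g M = \sum_y e y * g (sl2_inv y *m M).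
Proof.
move=> e_sl2; rewrite ffunE; apply: eq_bigr => y _.
have [-> | /e_sl2/mul_sl2_inv [yK Ky]] := eqVneq (e y) 0.
  by rewrite mul0r big1 // => z _; rewrite mul0r.
rewrite (big_pred1 (sl2_inv y *m M)) // => z /=.
apply/eqP/eqP => [<- | ->]; first by rewrite mulmxA Ky mul1mx.
by rewrite mulmxA yK mul1mx.
Qed.

(* [e] is the indicator function of the injective image of [P] under [h]. *)
Lemma sum_indicator_image (J : finType) (P : pred J) (h : J -> 'M[F]_2)
    (h' : 'M[F]_2 -> J) (e : grp_alg F) (G : 'M[F]_2 -> rat) :
  (forall y, e y != 0 -> e y = 1 /\ h (h' y) = y) ->
  (forall j, (e (h j) != 0) && (h' (h j) == j) = P j) ->
  \sum_y e y * G y = \sum_(j | P j) G (h j).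
Proof.
move=> e_supp e_img.
rewrite (bigID (fun y => e y != 0)) /= [X in _ + X]big1 ?addr0; last first.
  by move=> y /negPn/eqP ->; rewrite mul0r.
rewrite (reindex_onto h h'); last by move=> y /e_supp [].
apply: eq_big => j; first by rewrite e_img.
by move=> /andP [ej _]; rewrite (e_supp _ ej).1 mul1r.
Qed.

Lemma sum_nz_const (K : rat) : \sum_(t : F | t != 0) K = (q - 1) * K.
Proof.
have split0 : \sum_(t : F) K = K + \sum_(t : F | t != 0) K by rewrite (bigD1 0).
have -> : \sum_(t : F | t != 0) K = \sum_(t : F) K - K by rewrite split0; ring.
by rewrite sumr_const -mulr_natl; ring.
Qed.

Lemma sum_nz (g : bool -> rat) : \sum_(t : F) g (t != 0) = g false + (q - 1) * g true.
Proof.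
rewrite (bigD1 0) //= eqxx -sum_nz_const; congr (_ + _).
by apply: eq_bigr => t ->.
Qed.

Lemma sum_nz_neq (G : bool -> bool -> rat) (e : F) : e != 0 ->
  \sum_(s : F) G (s != 0) (s != e) = G false true + G true false + (q - 2) * G true true.
Proof.
move=> e_neq0; rewrite (bigD1 0) //= eqxx eq_sym e_neq0 (bigD1 e e_neq0) /= e_neq0 eqxx.
rewrite (eq_bigr (fun _ => G true true)); last by move=> s /andP [-> ->].
have := sum_nz_const (G true true); rewrite (bigD1 e e_neq0) /= => nz_sum.
have -> : (q - 2) * G true true = (q - 1) * G true true - G true true by ring.
by rewrite -nz_sum; ring.
Qed.

Lemma sum_affine (G : F -> rat) (al be : F) : be != 0 ->
  \sum_t G (al - t * be) = \sum_t G t.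
Proof.
move=> be_neq0; rewrite [RHS](reindex_inj (h := fun t => al - t * be)) //.
by move=> x y /= /addrI /oppr_inj /(mulIf be_neq0).
Qed.

Lemma sum_affine_nz (g : bool -> rat) (al be : F) : be != 0 ->
  \sum_t g (al - t * be != 0) = g false + (q - 1) * g true.
Proof. by move=> be_neq0; rewrite (sum_affine (fun s => g (s != 0))) // sum_nz. Qed.

Lemma pfun_scale f (s a b c d : F) : s != 0 ->
  pfun f (mx22 (s^-1 * a) (s^-1 * b) (s * c) (s * d)) = pfun f (mx22 a b c d).
Proof.
move=> s_neq0; rewrite !ffunE /in_SL2 /zpat !mx22E.
have -> : s^-1 * a * (s * d) - s^-1 * b * (s * c) = a * d - b * c by field.
by rewrite !mulf_eq0 !invr_eq0 (negbTE s_neq0).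
Qed.

Lemma pfun_swap f (s a b c d : F) : s != 0 ->
  pfun f (mx22 (- s * c) (- s * d) (s^-1 * a) (s^-1 * b)) =
  pfun (fun p => f (swap_rows p)) (mx22 a b c d).
Proof.
move=> s_neq0; rewrite !ffunE /in_SL2 /zpat !mx22E.
have -> : - s * c * (s^-1 * b) - - s * d * (s^-1 * a) = a * d - b * c by field.
by rewrite !mulf_eq0 !invr_eq0 oppr_eq0 (negbTE s_neq0).
Qed.

End LeftMultiplication.

Section Generators.
Variable F : finFieldType.
Local Notation q := (#|F|%:R : rat).
Implicit Types (M y : 'M[F]_2) (f : pattern -> rat).

Definition sc_basis k : grp_alg F := pfun (fun p => (p == gen_pattern k)%:R).

Lemma pfun_sum_sc_basis f :
  pfun f = \sum_(k < 7) gscale (f (gen_pattern k)) (sc_basis k).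
Proof.
apply/ffunP => M; rewrite sum_ffunE ffunE.
under eq_bigr => k _ do rewrite !ffunE.
case sl2M: (in_SL2 M); last by rewrite big1 // => k _; rewrite mulr0.
by rewrite sum_gen_pattern // sl2_zpat.
Qed.

(* A + D_+, the sum of the upper triangular matrices of SL_2(F). *)
Definition borel : grp_alg F := pfun (fun p => (~~ p.1.2)%:R).

Definition unipotent_sum f (cn dn : bool) : rat :=
  if cn then
    if dn then f (false, true, true, true) + f (true, false, true, true)
               + (q - 2) * f (true, true, true, true)
    else f (false, true, true, false) + (q - 1) * f (true, true, true, false)
  else f (true, false, false, true) + (q - 1) * f (true, true, false, true).

Lemma sum_unipotent f (a b c d : F) :
  \sum_t pfun f (mx22 (a - t * c) (b - t * d) c d)
  = pfun (fun p => unipotent_sum f p.1.2 p.2) (mx22 a b c d).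
Proof.
have detE t : (a - t * c) * d - (b - t * d) * c = a * d - b * c by ring.
under eq_bigr => t _ do rewrite ffunE /in_SL2 /zpat !mx22E detE.
rewrite ffunE /in_SL2 /zpat !mx22E.
have [det1 | _] := eqVneq (a * d - b * c) 1; last by rewrite big1.
rewrite /unipotent_sum /=; have [c0 | c_neq0] := eqVneq c 0.
  have : a * d != 0 by move: det1; rewrite c0 mulr0 subr0 => ->; rewrite oner_eq0.
  rewrite mulf_eq0 negb_or => /andP [a_neq0 d_neq0].
  rewrite /= d_neq0 c0; under eq_bigr => t _ do rewrite mulr0 subr0 a_neq0.
  exact: (sum_affine_nz (fun x => f (true, x, false, true))).
have [d0 | d_neq0] := eqVneq d 0.
  have : b * c != 0.
    move: det1; rewrite d0 mulr0 sub0r => /(congr1 -%R); rewrite opprK => ->.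
    by rewrite oppr_eq0 oner_eq0.
  rewrite mulf_eq0 negb_or => /andP [b_neq0 _].
  rewrite /= d0; under eq_bigr => t _ do rewrite mulr0 subr0 b_neq0.
  exact: (sum_affine_nz (fun x => f (x, true, true, false))).
have lower_row t : (b - t * d != 0) = (a - t * c != d^-1).
  have -> : b - t * d = ((a - t * c) * d - 1) / c.
    by apply: (mulIf c_neq0); rewrite mulfVK // -det1; ring.
  rewrite mulf_eq0 invr_eq0 (negbTE c_neq0) orbF subr_eq0; congr (~~ _).
  apply/eqP/eqP => [ad1 | ->]; last exact: mulVf.
  by apply/esym/mulr1_eq; rewrite mulrC.
rewrite /=; under eq_bigr => t _ do rewrite lower_row.
rewrite (sum_affine (fun s => f (s != 0, s != d^-1, true, true))) //.
by rewrite (sum_nz_neq (fun u v => f (u, v, true, true))) ?invr_eq0.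
Qed.

Lemma gmul_diag f : gmul (sc_basis 0) (pfun f) = pfun (fun p => (q - 1) * f p).
Proof.
apply/ffunP => M; rewrite gmul_sl2l; last exact: pfun_supp.
rewrite (sum_indicator_image (P := fun s : F => s != 0)
           (h := fun s => mx22 s 0 0 s^-1) (h' := fun y => y 0 0)).
- under eq_bigr => s s_neq0.
    have -> : sl2_inv (mx22 s 0 0 s^-1) *m M
              = mx22 (s^-1 * M 0 0) (s^-1 * M 0 1) (s * M 1 0) (s * M 1 1).
      by rewrite /sl2_inv !mx22E {1}[M]mx22_eta mul_mx22; congr mx22; ring.
    rewrite pfun_scale // -mx22_eta.
  over.
  by rewrite sum_nz_const !ffunE; case: (in_SL2 M); rewrite ?mulr0.
- move=> y; rewrite /sc_basis ffunE; case sl2y: (in_SL2 y); last by rewrite eqxx.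
  have [zpat_y _ | _] := eqVneq (zpat y) (gen_pattern 0); last by rewrite eqxx.
  move: zpat_y => -[_ /negbFE/eqP b0 /negbFE/eqP c0 _]; split => //.
  rewrite [RHS]mx22_eta b0 c0; congr mx22; apply: mulr1_eq.
  by move/eqP: sl2y; rewrite b0 mul0r subr0.
- move=> s; rewrite mx22E eqxx andbT /sc_basis ffunE /in_SL2 /zpat !mx22E.
  have [-> | s_neq0] := eqVneq s 0; first by rewrite !mul0r subr0 (eq_sym 0 1) oner_eq0 eqxx.
  by rewrite mulfV // mul0r subr0 /= invr_eq0 s_neq0 !eqxx.
Qed.

Lemma gmul_antidiag f :
  gmul (sc_basis 1) (pfun f) = pfun (fun p => (q - 1) * f (swap_rows p)).
Proof.
apply/ffunP => M; rewrite gmul_sl2l; last exact: pfun_supp.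
rewrite (sum_indicator_image (P := fun s : F => s != 0)
           (h := fun s => mx22 0 s (- s^-1) 0) (h' := fun y => y 0 1)).
- under eq_bigr => s s_neq0.
    have -> : sl2_inv (mx22 0 s (- s^-1) 0) *m M
              = mx22 (- s * M 1 0) (- s * M 1 1) (s^-1 * M 0 0) (s^-1 * M 0 1).
      by rewrite /sl2_inv !mx22E {1}[M]mx22_eta mul_mx22; congr mx22; ring.
    rewrite pfun_swap // -mx22_eta.
  over.
  by rewrite sum_nz_const !ffunE; case: (in_SL2 M); rewrite ?mulr0.
- move=> y; rewrite /sc_basis ffunE; case sl2y: (in_SL2 y); last by rewrite eqxx.
  have [zpat_y _ | _] := eqVneq (zpat y) (gen_pattern 1); last by rewrite eqxx.
  move: zpat_y => -[/negbFE/eqP a0 _ _ /negbFE/eqP d0]; split => //.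
  rewrite [RHS]mx22_eta a0 d0; congr mx22; apply/oppr_inj; rewrite opprK.
  by apply: mulr1_eq; move/eqP: sl2y; rewrite a0 mul0r sub0r -mulrN.
- move=> s; rewrite mx22E eqxx andbT /sc_basis ffunE /in_SL2 /zpat !mx22E.
  have [-> | s_neq0] := eqVneq s 0.
    by rewrite !mul0r sub0r oppr0 (eq_sym 0 1) oner_eq0 eqxx.
  by rewrite mulr0 mulrN mulfV // sub0r opprK /= oppr_eq0 invr_eq0 s_neq0 !eqxx.
Qed.

Lemma gmul_borel f :
  gmul borel (pfun f) = pfun (fun p => (q - 1) * unipotent_sum f p.1.2 p.2).
Proof.
apply/ffunP => M; rewrite gmul_sl2l; last exact: pfun_supp.
rewrite (sum_indicator_image (P := fun j : F * F => j.1 != 0)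
           (h := fun j => mx22 j.1 j.2 0 j.1^-1) (h' := fun y => (y 0 0, y 0 1))).
- have shear_rescale x : x != 0 ->
      \sum_t pfun f (mx22 (M 0 0 - x * t * M 1 0) (M 0 1 - x * t * M 1 1) (M 1 0) (M 1 1))
      = \sum_t pfun f (mx22 (M 0 0 - t * M 1 0) (M 0 1 - t * M 1 1) (M 1 0) (M 1 1)).
    by move=> x_neq0; rewrite [RHS](reindex_inj (mulfI x_neq0)).
  transitivity (\sum_(x : F | x != 0) \sum_t pfun f (sl2_inv (mx22 x t 0 x^-1) *m M)).
    by rewrite pair_big_dep; apply: eq_big => [[x t] | [x t] _] //=; rewrite andbT.
  under eq_bigr => x x_neq0.
    under eq_bigr => t _.
      have -> : sl2_inv (mx22 x t 0 x^-1) *m M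
                = mx22 (x^-1 * (M 0 0 - (x * t) * M 1 0)) (x^-1 * (M 0 1 - (x * t) * M 1 1))
                       (x * M 1 0) (x * M 1 1).
        by rewrite /sl2_inv !mx22E {1}[M]mx22_eta mul_mx22; congr mx22; field.
      rewrite pfun_scale //.
    over.
    rewrite (shear_rescale _ x_neq0) sum_unipotent -mx22_eta.
  over.
  by rewrite sum_nz_const !ffunE; case: (in_SL2 M); rewrite ?mulr0.
- move=> y; rewrite /borel ffunE /zpat /=; case sl2y: (in_SL2 y); last by rewrite eqxx.
  have [c0 _ | ] := eqVneq (y 1 0) 0; last by rewrite eqxx.
  split => //; rewrite [RHS]mx22_eta c0; congr mx22; apply: mulr1_eq.
  by move/eqP: sl2y; rewrite c0 mulr0 subr0.
- move=> [x t]; rewrite /= !mx22E eqxx andbT /borel ffunE /in_SL2 /zpat !mx22E.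
  have [-> | x_neq0] := eqVneq x 0.
    by rewrite !mul0r mulr0 subr0 (eq_sym 0 1) oner_eq0 eqxx.
  by rewrite mulfV // mulr0 subr0 /= !eqxx.
Qed.

End Generators.
Arguments borel {F}.

(* The images, under the three characters and the two-dimensional
   representation of SC_Q, of the function taking the value c_k on the
   matrices of pattern [gen_pattern k]; here q = #|F|. *)
Definition to_target (q c0 c1 c2 c3 c4 c5 c6 : rat) : target :=
  let r := q - 1 in
  (r*c0 + r*c1 + r^+2*(q-2)*c2 + r^+2*(c3+c4+c5+c6),
   r*c0 + r*c1 + 2*r*c2 - r*(c3+c4+c5+c6),
   r*c0 - r*c1 - r*c3 - r*c4 + r*c5 + r*c6,
   mx22 (r*c0 - r*(q-2)*c2 + r^+2*c3 - r*c4 - r*c5)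
        (r*c1 - r*(q-2)*c2 - r*c3 + r^+2*c5 - r*c6)
        (r*c1 - r*(q-2)*c2 - r*c4 - r*c5 + r^+2*c6)
        (r*c0 - r*(q-2)*c2 - r*c3 + r^+2*c4 - r*c6)).

Definition from_target (q : rat) (k : nat) (x : target) : rat :=
  let r := q - 1 in
  let T := 1 / (q * r * (q + 1)) in
  let s := (q - 2) / (2 * q * r) in
  let u := 1 / (q * r ^+ 2) in
  let s' := - (q - 2) / (2 * q * r ^+ 2) in
  let h := 1 / (2 * (q + 1)) in
  let h' := 1 / (2 * r * (q + 1)) in
  let al := 1 / (r * (q + 1)) in
  let be := - 1 / (r ^+ 2 * (q + 1)) in
  let: (tau, cp, cm, m) := x in
  match k with
  | 0 => T * tau + s * cp + h * cm + al * m 0 0 + al * m 1 1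
  | 1 => T * tau + s * cp - h * cm + al * m 0 1 + al * m 1 0
  | 2 => T * tau + u * cp + be * (m 0 0 + m 0 1 + m 1 0 + m 1 1)
  | 3 => T * tau + s' * cp - h' * cm + al * m 0 0 + be * m 1 0 + be * m 1 1
  | 4 => T * tau + s' * cp - h' * cm + be * m 0 0 + be * m 0 1 + al * m 1 1
  | 5 => T * tau + s' * cp + h' * cm + al * m 0 1 + be * m 1 0 + be * m 1 1
  | _ => T * tau + s' * cp + h' * cm + be * m 0 0 + be * m 0 1 + al * m 1 0
  end.

Section Coordinates.
Variable q : rat.
Hypotheses (q_neq0 : q != 0) (qB1_neq0 : q - 1 != 0) (qD1_neq0 : q + 1 != 0).

Lemma to_targetK (c : nat -> rat) k : (k < 7)%N ->
  from_target q k (to_target q (c 0) (c 1) (c 2) (c 3) (c 4) (c 5) (c 6)) = c k.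
Proof.
have two_neq0 : (2 : rat) != 0 by [].
case: k => [|[|[|[|[|[|[|k]]]]]]] // _; rewrite /from_target /to_target !mx22E;
  by field; rewrite ?q_neq0 ?qB1_neq0 ?qD1_neq0 ?two_neq0.
Qed.

Lemma from_targetK x :
  to_target q (from_target q 0 x) (from_target q 1 x) (from_target q 2 x)
    (from_target q 3 x) (from_target q 4 x) (from_target q 5 x) (from_target q 6 x) = x.
Proof.
have two_neq0 : (2 : rat) != 0 by [].
case: x => [[[tau cp] cm] m]; rewrite [in RHS](mx22_eta m) /to_target /from_target /=.
by congr (_, _, _, mx22 _ _ _ _); field; rewrite ?q_neq0 ?qB1_neq0 ?qD1_neq0 ?two_neq0.
Qed.

End Coordinates.

Lemma target_addE (a b c a' b' c' : rat) (m m' : 'M[rat]_2) :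
  ((a, b, c, m) : target) + (a', b', c', m') = (a + a', b + b', c + c', m + m').
Proof. by []. Qed.

Lemma target_mulE (a b c a' b' c' : rat) (m m' : 'M[rat]_2) :
  ((a, b, c, m) : target) * (a', b', c', m') = (a * a', b * b', c * c', m *m m').
Proof. by rewrite mulmxE. Qed.

Lemma tscaleMl a (x y : target) : tscale a (x * y) = tscale a x * y.
Proof.
case: x => [[[x1 x2] x3] m]; case: y => [[[y1 y2] y3] m'].
by rewrite /tscale !target_mulE /= scalemxAl; congr (_, _, _, _); ring.
Qed.

Section TargetIdentities.
Variables q c0 c1 c2 c3 c4 c5 c6 : rat.
Local Notation r := (q - 1).
Local Notation to_target_c := (to_target q c0 c1 c2 c3 c4 c5 c6).

Lemma to_target_scaleD a d0 d1 d2 d3 d4 d5 d6 :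
  tscale a to_target_c + to_target q d0 d1 d2 d3 d4 d5 d6
  = to_target q (a * c0 + d0) (a * c1 + d1) (a * c2 + d2) (a * c3 + d3)
                (a * c4 + d4) (a * c5 + d5) (a * c6 + d6).
Proof.
rewrite /to_target /tscale /= target_addE scale_mx22 add_mx22.
by congr (_, _, _, mx22 _ _ _ _); ring.
Qed.

Lemma to_target_mul_diag :
  to_target q 1 0 0 0 0 0 0 * to_target_c
  = to_target q (r * c0) (r * c1) (r * c2) (r * c3) (r * c4) (r * c5) (r * c6).
Proof.
rewrite /to_target target_mulE mul_mx22.
by congr (_, _, _, mx22 _ _ _ _); ring.
Qed.

Lemma to_target_mul_antidiag :
  to_target q 0 1 0 0 0 0 0 * to_target_c
  = to_target q (r * c1) (r * c0) (r * c2) (r * c6) (r * c5) (r * c4) (r * c3).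
Proof.
rewrite /to_target target_mulE mul_mx22.
by congr (_, _, _, mx22 _ _ _ _); ring.
Qed.

Lemma to_target_mul_borel :
  let u := r * (c0 + r * c3) in
  let v := r * (c1 + r * c5) in
  let w := r * (c6 + c4 + (q - 2) * c2) in
  to_target q 1 0 0 1 0 0 0 * to_target_c = to_target q u v w u w v w.
Proof.
rewrite /to_target target_mulE mul_mx22 /=.
by congr (_, _, _, mx22 _ _ _ _); ring.
Qed.

End TargetIdentities.

Section BasisFromGenerators.
Variable F : finFieldType.
Local Notation q := (#|F|%:R : rat).
Local Notation A := (sc_basis F 0).
Local Notation B := (sc_basis F 1).
Local Notation P := (@borel F).

Lemma cardF_nonzero : [/\ q != 0, q - 1 != 0 & q + 1 != 0].
Proof.
have : (1%:R : rat) < q by rewrite ltr_nat card_finNzRing_gt1.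
by move=> q_gt1; split; apply/eqP => q_eq; lra.
Qed.

Lemma sc_basis3E : sc_basis F 3 = gscale (-1) A + P.
Proof.
rewrite pfunZ pfunD; apply: eq_pfun => k.
by case: k => [|[|[|[|[|[|[|k]]]]]]] //= _; ring.
Qed.

Lemma sc_basis6E : sc_basis F 6 = gscale (q - 1)^-1 (gmul B P) + gscale (-1) B.
Proof.
have [_ qB1_neq0 _] := cardF_nonzero.
rewrite gmul_antidiag !pfunZ pfunD; apply: eq_pfun => k.
by case: k => [|[|[|[|[|[|[|k]]]]]]] //= _; field.
Qed.

Lemma sc_basis5E : sc_basis F 5 = gscale (q - 1)^-1 (gmul P B) + gscale (-1) B.
Proof.
have [_ qB1_neq0 _] := cardF_nonzero.
rewrite gmul_borel !pfunZ pfunD; apply: eq_pfun => k.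
by case: k => [|[|[|[|[|[|[|k]]]]]]] //= _; rewrite /unipotent_sum /=; field.
Qed.

Lemma sc_basis4E :
  sc_basis F 4 = gscale ((q - 1) ^+ 2)^-1 (gmul B (gmul P B)) + gscale (-1) A.
Proof.
have [_ qB1_neq0 _] := cardF_nonzero.
rewrite gmul_borel gmul_antidiag !pfunZ pfunD; apply: eq_pfun => k.
by case: k => [|[|[|[|[|[|[|k]]]]]]] //= _; rewrite /unipotent_sum /=; field.
Qed.

Lemma sc_basis2E :
  sc_basis F 2 = gscale ((q - 1) ^+ 2)^-1 (gmul P (gmul B P))
    + (gscale (-1) B + (gscale (-1) (sc_basis F 4)
    + (gscale (-1) (sc_basis F 5) + gscale (-1) (sc_basis F 6)))).
Proof.
have [_ qB1_neq0 _] := cardF_nonzero.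
rewrite gmul_antidiag gmul_borel !pfunZ !pfunD; apply: eq_pfun => k.
by case: k => [|[|[|[|[|[|[|k]]]]]]] //= _; rewrite /unipotent_sum /=; field.
Qed.

End BasisFromGenerators.

Lemma exists_neq2 (T : finType) (x y : T) : (2 < #|T|)%N -> exists z, z != x /\ z != y.
Proof.
move=> T_gt2; have [z /andP [zx zy] | none] := pickP (fun z => (z != x) && (z != y)).
  by exists z.
suff : (#|T| <= 2)%N by rewrite leqNgt T_gt2.
apply: leq_trans (card_size [:: x; y]); apply: subset_leq_card; apply/subsetP => z _.
by move: (none z) => /negbT; rewrite !inE negb_and !negbK.
Qed.

Section Isomorphism.
Variables (F : finFieldType) (t : F).
Hypotheses (t_neq0 : t != 0) (t_neq1 : t != 1).
Local Notation q := (#|F|%:R : rat).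

Definition rep (k : nat) : 'M[F]_2 :=
  match k with
  | 0 => mx22 1 0 0 1 | 1 => mx22 0 1 (-1) 0 | 2 => mx22 t (t - 1) 1 1
  | 3 => mx22 1 1 0 1 | 4 => mx22 1 0 1 1   | 5 => mx22 1 1 (-1) 0
  | _ => mx22 0 1 (-1) 1
  end.

Lemma pfun_rep f k : (k < 7)%N -> pfun f (rep k) = f (gen_pattern k).
Proof.
have tB1_neq0 : t - 1 != 0 by rewrite subr_eq0.
have N1_neq0 : (-1 : F) != 0 by rewrite oppr_eq0 oner_eq0.
case: k => [|[|[|[|[|[|[|k]]]]]]] // _;
  rewrite ffunE /in_SL2 /zpat /= !mx22E ?mulr0 ?mul0r ?mulr1 ?mul1r ?subr0 ?sub0r ?opprK
          ?eqxx ?oner_eq0 ?N1_neq0 ?t_neq0 ?tB1_neq0 //.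
by rewrite opprB addrC subrK eqxx.
Qed.

Definition phi (x : grp_alg F) : target :=
  to_target q (x (rep 0)) (x (rep 1)) (x (rep 2)) (x (rep 3))
              (x (rep 4)) (x (rep 5)) (x (rep 6)).

Lemma phi_pfun f : phi (pfun f) =
  to_target q (f (gen_pattern 0)) (f (gen_pattern 1)) (f (gen_pattern 2))
    (f (gen_pattern 3)) (f (gen_pattern 4)) (f (gen_pattern 5)) (f (gen_pattern 6)).
Proof. by rewrite /phi !pfun_rep. Qed.

Lemma phi_pfunK f k : (k < 7)%N -> from_target q k (phi (pfun f)) = f (gen_pattern k).
Proof.
have [q_neq0 qB1_neq0 qD1_neq0] := cardF_nonzero F.
by rewrite phi_pfun; apply: (to_targetK q_neq0 qB1_neq0 qD1_neq0 (fun k => f (gen_pattern k))).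
Qed.

Lemma phi_scaleD a x y : phi (gscale a x + y) = tscale a (phi x) + phi y.
Proof. by rewrite /phi to_target_scaleD !ffunE. Qed.

Lemma phi0 : phi 0 = 0.
Proof.
by rewrite -(pfun0 F) phi_pfun /to_target !mulr0 !addr0 ?subr0 mx22_0.
Qed.

Definition transported (u : grp_alg F) : Prop :=
  (exists fu, u = pfun fu) /\
  forall f, exists g, gmul u (pfun f) = pfun g /\ phi (pfun g) = phi u * phi (pfun f).

Lemma transported_scaleD a u v :
  transported u -> transported v -> transported (gscale a u + v).
Proof.
move=> [[fu ->] u_tr] [[fv ->] v_tr]; split.
  by exists (fun p => a * fu p + fv p); rewrite pfunZ pfunD.
move=> f; have [gu [gu_def phi_gu]] := u_tr f; have [gv [gv_def phi_gv]] := v_tr f.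
exists (fun p => a * gu p + gv p); rewrite -pfunD -pfunZ.
by rewrite gmul_scaleDl gu_def gv_def !phi_scaleD phi_gu phi_gv mulrDl tscaleMl.
Qed.

Lemma transported0 : transported 0.
Proof.
split; first by exists (fun _ => 0); rewrite pfun0.
by move=> f; exists (fun _ => 0); rewrite gmul0l pfun0 phi0 mul0r.
Qed.

Lemma transported_scale a u : transported u -> transported (gscale a u).
Proof. by move=> u_tr; rewrite -[gscale a u]addr0; apply: transported_scaleD transported0. Qed.

Lemma transportedD u v : transported u -> transported v -> transported (u + v).
Proof. by rewrite -[u in u + v]gscale1; apply: transported_scaleD. Qed.

Lemma transported_mul u v : transported u -> transported v -> transported (gmul u v).
Proof.
move=> [_ u_tr] [[fv v_def] v_tr]; split.
  by have [g [uv_def _]] := u_tr fv; exists g; rewrite v_def uv_def.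
move=> f; have [g1 [g1_def phi_g1]] := v_tr f; have [g2 [g2_def phi_g2]] := u_tr g1.
exists g2; rewrite gmulA g1_def g2_def phi_g2 phi_g1; split => //.
have [g3 [g3_def phi_g3]] := u_tr fv.
by rewrite v_def g3_def phi_g3 -v_def mulrA.
Qed.

Lemma transported_diag : transported (sc_basis F 0).
Proof.
split; first by eexists.
by move=> f; eexists; split; first exact: gmul_diag; rewrite !phi_pfun to_target_mul_diag.
Qed.

Lemma transported_antidiag : transported (sc_basis F 1).
Proof.
split; first by eexists.
by move=> f; eexists; split; first exact: gmul_antidiag; rewrite !phi_pfun to_target_mul_antidiag.
Qed.

Lemma transported_borel : transported borel.
Proof.
split; first by eexists.
by move=> f; eexists; split; first exact: gmul_borel; rewrite !phi_pfun to_target_mul_borel.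
Qed.

Lemma transported_sc_basis k : (k < 7)%N -> transported (sc_basis F k).
Proof.
have tA := transported_diag; have tB := transported_antidiag; have tP := transported_borel.
have t3 : transported (sc_basis F 3).
  by rewrite sc_basis3E; apply: transported_scaleD tA tP.
have t4 : transported (sc_basis F 4).
  rewrite sc_basis4E; apply: transported_scaleD (transported_scale _ tA).
  exact: transported_mul tB (transported_mul tP tB).
have t5 : transported (sc_basis F 5).
  rewrite sc_basis5E; apply: transported_scaleD (transported_scale _ tB).
  exact: transported_mul tP tB.
have t6 : transported (sc_basis F 6).
  rewrite sc_basis6E; apply: transported_scaleD (transported_scale _ tB).
  exact: transported_mul tB tP.
have t2 : transported (sc_basis F 2).
  rewrite sc_basis2E; apply: transported_scaleD.
    exact: transported_mul tP (transported_mul tB tP).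
  by do 3!(apply: transportedD; first exact: transported_scale); exact: transported_scale.
by case: k => [|[|[|[|[|[|[|k]]]]]]].
Qed.

Lemma transported_SCQ x : in_SCQ x -> transported x.
Proof.
move=> /SCQ_pfun [f ->]; rewrite pfun_sum_sc_basis.
elim/big_ind: _ => [|u v|k _]; [exact: transported0 | exact: transportedD |].
exact/transported_scale/transported_sc_basis.
Qed.

Lemma phi_mul x y : in_SCQ x -> in_SCQ y -> phi (gmul x y) = phi x * phi y.
Proof.
move=> /transported_SCQ [_ x_tr] /SCQ_pfun [f ->].
by have [g [-> ->]] := x_tr f.
Qed.

Lemma phi_inj x y : in_SCQ x -> in_SCQ y -> phi x = phi y -> x = y.
Proof.
move=> /SCQ_pfun [f ->] /SCQ_pfun [g ->] phi_fg; apply: eq_pfun => k lt_k7.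
by rewrite -!(phi_pfunK _ lt_k7) phi_fg.
Qed.

Lemma phi_surj (x : target) : exists2 y, in_SCQ y & phi y = x.
Proof.
have [q_neq0 qB1_neq0 qD1_neq0] := cardF_nonzero F.
exists (pfun (fun p => from_target q (pattern_index p) x)); first exact: pfun_SCQ.
by rewrite phi_pfun /=; apply: from_targetK.
Qed.

End Isomorphism.

Theorem theorem3p1 (F : finFieldType) (hq : (2 < #|F|)%N) :
  exists phi : grp_alg F -> target,
    [/\ (forall (a : rat) (x y : grp_alg F), in_SCQ x -> in_SCQ y ->
           phi (gscale a x + y) = tscale a (phi x) + phi y),
        (forall x y : grp_alg F, in_SCQ x -> in_SCQ y ->
           phi (gmul x y) = phi x * phi y),
        (forall x y : grp_alg F, in_SCQ x -> in_SCQ y -> phi x = phi y -> x = y)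
      & (forall t : target, exists2 x : grp_alg F, in_SCQ x & phi x = t)].
Proof.
have [t [t_neq0 t_neq1]] := exists_neq2 0 1 hq.
exists (phi t); split.
- by move=> a x y _ _; apply: phi_scaleD.
- exact: phi_mul t_neq0 t_neq1.
- exact: phi_inj t_neq0 t_neq1.
- exact: phi_surj t_neq0 t_neq1.
Qed.
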